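(* The space $(\mathbb{R}^{\mathbb{Z}_<},\tau_{\mathrm{St}})$ is not a Hausdorff space, but it is a preregular space (any two St-distinguishable points can be separated by disjoint neighbourhoods).
   Context: $\mathbb{R}^{\mathbb{Z}_<}$ is the set of formal series $\sum_{i\ge -k}a_i\epsilon^i$ ($k\in\mathbb{N}\cup\{0\}$, $a_i\in\mathbb{R}$), written $\langle a_{-k},\dots,\widehat{a_0},a_1,\dots\rangle$, with coefficientwise addition, Cauchy-product multiplication and lexicographic order ($\mathbf{x}<\mathbf{y}$ iff at the least index where coefficients differ, $\mathbf{x}$'s coefficient is smaller); reals are the elements with only $a_0$ possibly nonzero; $|\mathbf{x}|$ is the absolute value for this order. The metric is $d(\mathbf{x},\mathbf{y})=|\mathbf{y}-\mathbf{x}|\in\mathbb{R}^{\mathbb{Z}_<}$ and $B_{\mathbf{x}}(\mathbf{y})=\{\mathbf{z}: d(\mathbf{x},\mathbf{z})<\mathbf{y}\}$. A set $O$ is St-open iff for every $\mathbf{x}\in O$ there is $n\in\mathbb{N}$ with $B_{\mathbf{x}}(1/n)\subseteq O$; $\tau_{\mathrm{St}}$ is the topology generated by unions of balls with real radius (St-balls), i.e. the St-open sets. Two points are St-distinguishable iff some St-open set contains exactly one of them. *)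

From Stdlib Require Import Reals Lra Lia ZArith Classical ClassicalEpsilon.
Open Scope R_scope.

(* Elements of R^{Z_<}: formal series sum_{i >= -k} a_i eps^i, i.e. coefficient
   functions Z -> R vanishing below some index -k (k a natural number). *)
Record LC := mkLC {
  coef : Z -> R;
  coef_lb : exists k : nat, forall i : Z, (i < - Z.of_nat k)%Z -> coef i = 0
}.

Lemma sub_lb (x y : LC) :
  exists k : nat, forall i : Z, (i < - Z.of_nat k)%Z -> coef x i - coef y i = 0.
Proof.
  destruct (coef_lb x) as [k1 H1]; destruct (coef_lb y) as [k2 H2].
  exists (Nat.max k1 k2); intros i Hi.
  rewrite H1, H2; [lra| |]; lia.
Qed.

Definition LCsub (x y : LC) : LC := mkLC (fun i => coef x i - coef y i) (sub_lb x y).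

Lemma opp_lb (x : LC) :
  exists k : nat, forall i : Z, (i < - Z.of_nat k)%Z -> - coef x i = 0.
Proof.
  destruct (coef_lb x) as [k H]; exists k; intros i Hi; rewrite H; [lra|lia].
Qed.

Definition LCopp (x : LC) : LC := mkLC (fun i => - coef x i) (opp_lb x).

Lemma real_lb (r : R) :
  exists k : nat, forall i : Z, (i < - Z.of_nat k)%Z ->
    (if Z.eq_dec i 0 then r else 0) = 0.
Proof.
  exists 0%nat; intros i Hi; destruct (Z.eq_dec i 0); [lia|reflexivity].
Qed.

Definition LCreal (r : R) : LC :=
  mkLC (fun i => if Z.eq_dec i 0 then r else 0) (real_lb r).

Definition LClt (x y : LC) : Prop :=
  exists i : Z, (forall j : Z, (j < i)%Z -> coef x j = coef y j) /\ coef x i < coef y i.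

Definition LCabs (x : LC) : LC :=
  if excluded_middle_informative (LClt x (LCreal 0)) then LCopp x else x.

Definition LCdist (x y : LC) : LC := LCabs (LCsub y x).

Definition ball (x r : LC) : LC -> Prop := fun z => LClt (LCdist x z) r.

Definition St_open (O : LC -> Prop) : Prop :=
  forall x, O x -> exists n : nat, (0 < n)%nat /\
    forall z, ball x (LCreal (1 / INR n)) z -> O z.

Definition St_distinguishable (x y : LC) : Prop :=
  exists O : LC -> Prop, St_open O /\ ((O x /\ ~ O y) \/ (O y /\ ~ O x)).

Definition St_separated (x y : LC) : Prop :=
  exists U V : LC -> Prop, St_open U /\ St_open V /\ U x /\ V y /\
    (forall z, ~ (U z /\ V z)).

Definition St_Hausdorff : Prop :=
  forall x y : LC, x <> y -> St_separated x y.

Definition St_preregular : Prop :=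
  forall x y : LC, St_distinguishable x y -> St_separated x y.

(* An St-ball of real radius r > 0 around x contains every point having the
   same coefficients as x at all indices <= 0, and it is contained in the set
   of points agreeing with x at negative indices whose a_0 is within r of x's.
   Hence St-open sets cannot see coefficients of positive index, so 0 and eps
   cannot be separated, while two points differing at some index <= 0 are
   separated by the disjoint open "cylinders"
   { z | z agrees with x at negative indices and |z_0 - x_0| < d }. *)

From Stdlib Require Import Reals ZArith.
From Stdlib Require Import Lra Lia Classical ClassicalEpsilon.
Open Scope R_scope.

Lemma coef_LCreal0 (i : Z) : coef (LCreal 0) i = 0.
Proof. simpl; destruct (Z.eq_dec i 0); reflexivity. Qed.

Lemma coef_LCreal_neq0 (r : R) (i : Z) : i <> 0%Z -> coef (LCreal r) i = 0.
Proof. intros Hi; simpl; destruct (Z.eq_dec i 0); [contradiction | reflexivity]. Qed.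

Lemma Rabs_coef_LCabs (w : LC) (i : Z) : Rabs (coef (LCabs w) i) = Rabs (coef w i).
Proof.
  unfold LCabs; destruct (excluded_middle_informative _); simpl;
    [apply Rabs_Ropp | reflexivity].
Qed.

Lemma coef_LCabs_eq0 (w : LC) (i : Z) : coef (LCabs w) i = 0 <-> coef w i = 0.
Proof.
  unfold LCabs; destruct (excluded_middle_informative _); simpl; lra.
Qed.

Lemma coef_LCabs_ge0 (w : LC) (i : Z) :
  (forall j, (j < i)%Z -> coef (LCabs w) j = 0) -> 0 <= coef (LCabs w) i.
Proof.
  unfold LCabs; destruct (excluded_middle_informative (LClt w (LCreal 0))) as [Hneg | Hnneg];
    simpl; intros Hbelow.
  - destruct Hneg as [k [Hk_eq Hk_lt]]; rewrite coef_LCreal0 in Hk_lt.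
    destruct (Z.lt_trichotomy i k) as [Hik | [-> | Hki]].
    + rewrite Hk_eq, coef_LCreal0 by exact Hik; lra.
    + lra.
    + specialize (Hbelow k Hki); simpl in Hbelow; lra.
  - destruct (Rle_or_lt 0 (coef w i)) as [Hge | Hlt]; [exact Hge |].
    exfalso; apply Hnneg; exists i; rewrite coef_LCreal0; split; [| exact Hlt].
    intros j Hj; rewrite coef_LCreal0; exact (Hbelow j Hj).
Qed.

Lemma ball_LCreal_inv (x z : LC) (r : R) :
  ball x (LCreal r) z ->
  (forall j, (j < 0)%Z -> coef z j = coef x j) /\ Rabs (coef z 0 - coef x 0) <= r.
Proof.
  unfold ball, LCdist; set (w := LCsub z x); intros [i [Hagree Hlt]].
  assert (Hi : (0 <= i)%Z).
  { destruct (Z_lt_le_dec i 0) as [Hi | Hi]; [exfalso | exact Hi].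
    assert (Hge : 0 <= coef (LCabs w) i).
    { apply coef_LCabs_ge0; intros j Hj.
      rewrite Hagree by exact Hj; apply coef_LCreal_neq0; lia. }
    rewrite coef_LCreal_neq0 in Hlt by lia; lra. }
  assert (Hneg : forall j, (j < 0)%Z -> coef (LCabs w) j = 0).
  { intros j Hj; rewrite Hagree by lia; apply coef_LCreal_neq0; lia. }
  split.
  - intros j Hj; assert (E := proj1 (coef_LCabs_eq0 w j) (Hneg j Hj)); simpl in E; lra.
  - change (coef z 0 - coef x 0) with (coef w 0).
    rewrite <- (Rabs_coef_LCabs w 0), Rabs_pos_eq by (apply coef_LCabs_ge0; exact Hneg).
    destruct (Z.eq_dec i 0) as [-> | Hi0].
    + simpl in Hlt; lra.
    + rewrite Hagree by lia; simpl; lra.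
Qed.

Lemma ball_LCreal_intro (x z : LC) (r : R) :
  0 < r -> (forall j, (j <= 0)%Z -> coef z j = coef x j) -> ball x (LCreal r) z.
Proof.
  intros Hr Hagree; unfold ball, LCdist; exists 0%Z.
  assert (Hdiff0 : forall j, (j <= 0)%Z -> coef (LCabs (LCsub z x)) j = 0).
  { intros j Hj; apply coef_LCabs_eq0; simpl; rewrite Hagree by exact Hj; ring. }
  split.
  - intros j Hj; rewrite Hdiff0, coef_LCreal_neq0 by lia; reflexivity.
  - rewrite Hdiff0 by lia; simpl; exact Hr.
Qed.

Lemma St_open_principal_part (O : LC -> Prop) (x y : LC) :
  St_open O -> O x -> (forall j, (j <= 0)%Z -> coef y j = coef x j) -> O y.
Proof.
  intros HO Hx Hagree; destruct (HO x Hx) as [n [Hn Hball]].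
  apply Hball, ball_LCreal_intro; [| exact Hagree].
  apply Rdiv_lt_0_compat; [lra | apply lt_0_INR; exact Hn].
Qed.

Definition cylinder (x : LC) (d : R) : LC -> Prop :=
  fun z => (forall j, (j < 0)%Z -> coef z j = coef x j) /\ Rabs (coef z 0 - coef x 0) < d.

Lemma cylinder_center (x : LC) (d : R) : 0 < d -> cylinder x d x.
Proof. intros Hd; split; [reflexivity | rewrite Rminus_diag, Rabs_R0; exact Hd]. Qed.

Lemma St_open_cylinder (x : LC) (d : R) : St_open (cylinder x d).
Proof.
  intros z [Hz_agree Hz_near].
  destruct (archimed_cor1 (d - Rabs (coef z 0 - coef x 0))) as [n [Hn_small Hn]]; [lra |].
  exists n; split; [exact Hn |]; intros z' Hball.
  apply ball_LCreal_inv in Hball; destruct Hball as [Hz'_agree Hz'_near].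
  split.
  - intros j Hj; rewrite Hz'_agree by exact Hj; exact (Hz_agree j Hj).
  - replace (coef z' 0 - coef x 0) with ((coef z' 0 - coef z 0) + (coef z 0 - coef x 0)) by ring.
    unfold Rdiv in Hz'_near; rewrite Rmult_1_l in Hz'_near.
    pose proof (Rabs_triang (coef z' 0 - coef z 0) (coef z 0 - coef x 0)); lra.
Qed.

Lemma St_separated_cylinders (x y : LC) (d e : R) :
  0 < d -> 0 < e -> (forall z, ~ (cylinder x d z /\ cylinder y e z)) -> St_separated x y.
Proof.
  intros Hd He Hdisj; exists (cylinder x d), (cylinder y e).
  split; [apply St_open_cylinder |]; split; [apply St_open_cylinder |].
  split; [exact (cylinder_center x d Hd) |].
  split; [exact (cylinder_center y e He) | exact Hdisj].
Qed.

Lemma St_separated_of_coef_neq (x y : LC) (j : Z) :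
  (j <= 0)%Z -> coef x j <> coef y j -> St_separated x y.
Proof.
  intros Hj Hneq; destruct (Z.eq_dec j 0) as [-> | Hj0].
  - set (c := Rabs (coef x 0 - coef y 0)).
    assert (Hc : 0 < c) by (apply Rabs_pos_lt; lra).
    apply (St_separated_cylinders x y (c / 2) (c / 2)); [lra | lra |].
    intros z [[_ Hzx] [_ Hzy]].
    pose proof (Rabs_triang (coef x 0 - coef z 0) (coef z 0 - coef y 0)) as Htri.
    rewrite <- Rabs_Ropp, Ropp_minus_distr in Hzx.
    replace (coef x 0 - coef z 0 + (coef z 0 - coef y 0)) with (coef x 0 - coef y 0)
      in Htri by ring.
    fold c in Htri; lra.
  - apply (St_separated_cylinders x y 1 1); [lra | lra |].
    intros z [[Hzx _] [Hzy _]]; apply Hneq.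
    rewrite <- Hzx, <- Hzy by lia; reflexivity.
Qed.

Lemma coef_neq_of_St_distinguishable (x y : LC) :
  St_distinguishable x y -> exists j, (j <= 0)%Z /\ coef x j <> coef y j.
Proof.
  intros [O [HO Hsep]]; apply NNPP; intros Hsame.
  assert (Hagree : forall j, (j <= 0)%Z -> coef x j = coef y j).
  { intros j Hj; apply NNPP; intros Hneq; apply Hsame; exists j; auto. }
  destruct Hsep as [[Hx Hy] | [Hy Hx]].
  - apply Hy, (St_open_principal_part O x y HO Hx); intros j Hj; symmetry; auto.
  - exact (Hx (St_open_principal_part O y x HO Hy Hagree)).
Qed.

Lemma LCeps_lb : exists k : nat, forall i : Z, (i < - Z.of_nat k)%Z ->
  (if Z.eq_dec i 1 then 1 else 0) = 0.
Proof. exists 0%nat; intros i Hi; destruct (Z.eq_dec i 1); [lia | reflexivity]. Qed.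

Definition LCeps : LC := mkLC (fun i => if Z.eq_dec i 1 then 1 else 0) LCeps_lb.

Lemma LCeps_neq0 : LCeps <> LCreal 0.
Proof.
  intros E; assert (C : coef LCeps 1 = coef (LCreal 0) 1) by (rewrite E; reflexivity).
  simpl in C; lra.
Qed.

Lemma not_St_Hausdorff : ~ St_Hausdorff.
Proof.
  intros Haus; destruct (Haus _ _ LCeps_neq0) as [U [V [HU [HV [Ueps [V0 Hdisj]]]]]].
  apply (Hdisj (LCreal 0)); split; [| exact V0].
  apply (St_open_principal_part U LCeps (LCreal 0) HU Ueps).
  intros j Hj; simpl; destruct (Z.eq_dec j 0), (Z.eq_dec j 1); lia || reflexivity.
Qed.

Lemma St_preregular_LC : St_preregular.
Proof.
  intros x y Hdist; destruct (coef_neq_of_St_distinguishable x y Hdist) as [j [Hj Hneq]].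
  exact (St_separated_of_coef_neq x y j Hj Hneq).
Qed.

Theorem mainTheorem2 : ~ St_Hausdorff /\ St_preregular.
Proof. exact (conj not_St_Hausdorff St_preregular_LC). Qed.
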